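(* Let $b_1,\dots,b_N\in(0,1)$ and $c_1,c_2>0$ with $b_ib_j<1$, $b_ic_1<1$, $b_ic_2<1$ for all $i,j$. Then $\mathbb E^{\boldsymbol b,\boldsymbol b}_{\mathrm{GRW}}\big[V(\mathbf L)\big]<\infty$, where $V(\mathbf L)=(c_1c_2)^{\max_{1\le j\le N}(L_2(j)-L_1(j-1))}c_2^{L_1(N)-L_2(N)}$.
   Context: Under $\mathbb P^{\boldsymbol b,\boldsymbol b}_{\mathrm{GRW}}$, $\mathbf L_1=(L_1(j))_{0\le j\le N}$ and $\mathbf L_2=(L_2(j))_{0\le j\le N}$ are independent random walks with $L_1(0)=L_2(0)=0$ and independent increments $L_i(j)-L_i(j-1)\sim\mathrm{Geom}(b_j)$, where $\mathbb P(\mathrm{Geom}(q)=n)=(1-q)q^n$, $n\in\mathbb Z_{\ge0}$; $\mathbf L=(\mathbf L_1,\mathbf L_2)$. *)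

From HB Require Import structures.
From mathcomp Require Import all_boot all_order all_algebra.
From mathcomp Require Import all_classical all_reals.
From mathcomp Require Import ereal esum.
Set Implicit Arguments. Unset Strict Implicit. Unset Printing Implicit Defensive.
Import Order.TTheory GRing.Theory Num.Theory.
Local Open Scope ring_scope.

Section GRW.
Variables (R : realType) (N : nat).

Definition geom_pmf (q : R) (n : nat) : R := (1 - q) * q ^+ n.

(* An outcome of one walk = its increment sequence x : 'I_N -> nat,
   x i = L(i+1) - L(i).  L(j) = sum of the first j increments, L(0)=0. *)
Definition walk (x : {ffun 'I_N -> nat}) (j : nat) : nat :=
  \sum_(i < N | (i < j)%N) x i.

(* probability of the increment sequence x under independent
   increments L(j)-L(j-1) ~ Geom(b_j) (b_j is b (j-1) here) *)
Definition walk_prob (b : 'I_N -> R) (x : {ffun 'I_N -> nat}) : R :=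
  \prod_(i < N) geom_pmf (b i) (x i).

(* max_{1<=j<=N} (L2(j) - L1(j-1)), as an integer (for N >= 1; the seed is
   the j = 1 term, which is also included in the range, so it is harmless) *)
Definition max_gap (x1 x2 : {ffun 'I_N -> nat}) : int :=
  \big[Num.max/ ((walk x2 1)%:Z - (walk x1 0)%:Z)]_(1 <= j < N.+1)
     ((walk x2 j)%:Z - (walk x1 j.-1)%:Z).

Definition V (c1 c2 : R) (x1 x2 : {ffun 'I_N -> nat}) : R :=
  (c1 * c2) ^ (max_gap x1 x2) * c2 ^ ((walk x1 N)%:Z - (walk x2 N)%:Z).

(* E^{b,b}_GRW [ V(L) ] : expectation of a nonnegative function under the
   discrete law of the pair of independent walks, as a sum in \bar R *)
Definition E_GRW_V (b : 'I_N -> R) (c1 c2 : R) : \bar R :=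
  \esum_(x in [set: {ffun 'I_N -> nat} * {ffun 'I_N -> nat}])
     ((walk_prob b x.1 * walk_prob b x.2 * V c1 c2 x.1 x.2)%:E).

End GRW.

From HB Require Import structures.
From mathcomp Require Import all_boot all_order all_algebra.
From mathcomp Require Import all_classical all_reals.
From mathcomp Require Import ereal esum.
From mathcomp Require Import zify.
Import Order.TTheory GRing.Theory Num.Theory.
Local Open Scope ring_scope.

(* Writing C_k = max(1, c_k), the gap M = max_j (L2(j) - L1(j-1)) satisfies
   0 <= M <= L2(N) and 0 <= M + L1(N) - L2(N) <= L1(N), hence
   V(L) = c1^M c2^(M + L1(N) - L2(N)) <= C1^(L2(N)) C2^(L1(N)).
   The walks being independent, the expectation of this bound factorises into
   E[C2^(L1(N))] E[C1^(L2(N))], and E[C^(L(N))] = prod_i (1 - b_i)/(1 - b_i C)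
   is finite as soon as every b_i C < 1. *)

Lemma uniq_sub_ler_sum (R : numDomainType) (T : eqType) (s t : seq T)
    (F : T -> R) :
  uniq s -> uniq t -> {subset s <= t} -> {in t, forall x, 0 <= F x} ->
  \sum_(x <- s) F x <= \sum_(x <- t) F x.
Proof.
move=> s_uniq t_uniq st F_ge0.
have s_filter : perm_eq s [seq x <- t | x \in s].
  apply: uniq_perm => //; first exact: filter_uniq.
  by move=> x; rewrite mem_filter; case xs: (x \in s) => //=; rewrite st.
rewrite (perm_big _ s_filter) big_filter [leRHS](bigID (mem s)) /= lerDl.
by rewrite big_seq_cond sumr_ge0 // => x /andP[/F_ge0].
Qed.

Lemma sum_pairs_le_mul {R : numDomainType} {T1 T2 : eqType}
    (s : seq (T1 * T2)) (f : T1 -> R) (g : T2 -> R) :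
  uniq s -> (forall x, 0 <= f x) -> (forall y, 0 <= g y) ->
  \sum_(z <- s) f z.1 * g z.2 <=
    (\sum_(x <- undup (unzip1 s)) f x) * (\sum_(y <- undup (unzip2 s)) g y).
Proof.
move=> s_uniq f_ge0 g_ge0.
have -> : (\sum_(x <- undup (unzip1 s)) f x) * (\sum_(y <- undup (unzip2 s)) g y)
    = \sum_(z <- [seq (x, y) | x <- undup (unzip1 s), y <- undup (unzip2 s)])
        f z.1 * g z.2.
  by rewrite big_allpairs mulr_suml; apply: eq_bigr => x _; rewrite mulr_sumr.
apply: uniq_sub_ler_sum => //.
- by apply: allpairs_uniq; rewrite ?undup_uniq // => -[? ?] [? ?] _ _ [-> ->].
- move=> [x y] zs; apply: allpairs_f; rewrite mem_undup.
    by apply/mapP; exists (x, y).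
  by apply/mapP; exists (x, y).
- by move=> z _; rewrite mulr_ge0.
Qed.

Lemma geometric_partial_sum_le (R : numFieldType) (q : R) (n : nat) :
  0 <= q < 1 -> \sum_(k < n) q ^+ k <= (1 - q)^-1.
Proof.
move=> /andP[q_ge0 q_lt1]; have q1_gt0 : 0 < 1 - q by rewrite subr_gt0.
rewrite -[leRHS]mul1r ler_pdivlMr // mulrC -opprB mulNr -subrX1 opprB.
by rewrite lerBlDr lerDl exprn_ge0.
Qed.

Lemma exprz_le_max1 (R : realFieldType) (c : R) (k : int) (n : nat) :
  0 < c -> 0 <= k <= n%:Z -> c ^ k <= Num.max 1 c ^+ n.
Proof.
move=> c_gt0; case: k => [m /andP[_]|//]; rewrite lez_nat => mn.
have max_ge1 : 1 <= Num.max 1 c by rewrite le_max lexx.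
apply: le_trans (ler_weXn2l max_ge1 mn).
by rewrite lerXn2r ?nnegrE ?le_max ?lexx ?orbT ?(ltW c_gt0) ?(le_trans ler01).
Qed.

Lemma mul_max1_lt1 (R : realDomainType) (q c : R) :
  q < 1 -> q * c < 1 -> q * Num.max 1 c < 1.
Proof. by case: (leP 1 c) => _; rewrite ?mulr1. Qed.

Section Walks.
Variable N : nat.
Implicit Types x : {ffun 'I_N -> nat}.

Lemma walk0 x : walk x 0 = 0%N.
Proof. by rewrite /walk big_pred0. Qed.

Lemma walkN x : walk x N = (\sum_(i < N) x i)%N.
Proof. by rewrite /walk; apply: eq_bigl => i; rewrite ltn_ord. Qed.

Lemma walk_le_walkN x j : (walk x j <= walk x N)%N.
Proof. by rewrite walkN /walk [leqRHS](bigID (fun i : 'I_N => (i < j)%N)) leq_addr. Qed.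

Lemma max_gap_ge0 x1 x2 : 0 <= max_gap x1 x2.
Proof. by apply: le_trans (bigmax_ge_id _ _ _ _); rewrite walk0 subr0. Qed.

Lemma max_gap_le_walkN x1 x2 : max_gap x1 x2 <= (walk x2 N)%:Z.
Proof.
apply: bigmax_le => [|j _].
  by rewrite walk0 subr0 lez_nat walk_le_walkN.
by have := walk_le_walkN x2 j; lia.
Qed.

Lemma walkN_sub_le_max_gap x1 x2 :
  (0 < N)%N -> (walk x2 N)%:Z - (walk x1 N)%:Z <= max_gap x1 x2.
Proof.
move=> N_gt0; have N_in : N \in index_iota 1 N.+1 by rewrite mem_index_iota N_gt0 ltnSn.
apply: le_trans (le_bigmax_seq _ _ _ _ N_in isT).
by have := walk_le_walkN x1 N.-1; lia.
Qed.

Lemma V_le (R : realType) (c1 c2 : R) x1 x2 : (0 < N)%N -> 0 < c1 -> 0 < c2 ->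
  V c1 c2 x1 x2 <= Num.max 1 c1 ^+ walk x2 N * Num.max 1 c2 ^+ walk x1 N.
Proof.
move=> N_gt0 c1_gt0 c2_gt0.
have := max_gap_ge0 x1 x2; have := max_gap_le_walkN x1 x2.
have := walkN_sub_le_max_gap x1 x2 N_gt0.
rewrite /V; set M := max_gap x1 x2 => walkN_sub_le_M M_le_walkN M_ge0.
rewrite expfzMl -mulrA -expfzDr ?gt_eqF //.
apply: ler_pM; rewrite ?exprz_ge0 ?(ltW c1_gt0) ?(ltW c2_gt0) //.
  by apply: exprz_le_max1; rewrite // M_ge0 M_le_walkN.
by apply: exprz_le_max1 => //; lia.
Qed.

End Walks.

Section WalkMgf.
Variables (R : realType) (N : nat) (b : 'I_N -> R).
Hypothesis b_prob : forall i, 0 < b i < 1.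

Definition walk_mgf (C : R) : R := \prod_(i < N) ((1 - b i) / (1 - b i * C)).

Definition ffun_val {n} (y : {ffun 'I_N -> 'I_n}) : {ffun 'I_N -> nat} :=
  [ffun i => val (y i)].

Lemma ffun_val_inj n : injective (@ffun_val n).
Proof.
move=> y1 y2 /ffunP y12; apply/ffunP => i; apply: val_inj.
by have := y12 i; rewrite !ffunE.
Qed.

Lemma walk_prob_ge0 x : 0 <= walk_prob b x.
Proof.
apply: prodr_ge0 => i _; have /andP[b_gt0 b_lt1] := b_prob i.
by rewrite mulr_ge0 ?subr_ge0 ?exprn_ge0 ?ltW.
Qed.

Definition tilted_walk_prob (C : R) x : R := walk_prob b x * C ^+ walk x N.

Lemma tilted_walk_prob_ge0 (C : R) x : 0 <= C -> 0 <= tilted_walk_prob C x.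
Proof. by move=> C_ge0; rewrite mulr_ge0 ?walk_prob_ge0 ?exprn_ge0. Qed.

Lemma tilted_walk_probE (C : R) x :
  tilted_walk_prob C x = \prod_(i < N) ((1 - b i) * (b i * C) ^+ x i).
Proof.
rewrite /tilted_walk_prob walkN expr_sum /walk_prob -big_split /=.
by apply: eq_bigr => i _; rewrite /geom_pmf exprMn mulrA.
Qed.

Variable C : R.
Hypotheses (C_ge0 : 0 <= C) (bC_lt1 : forall i, b i * C < 1).

Lemma sum_box_tilted_walk_prob_le n :
  \sum_(y : {ffun 'I_N -> 'I_n}) tilted_walk_prob C (ffun_val y) <= walk_mgf C.
Proof.
under eq_bigr do rewrite tilted_walk_probE.
under eq_bigr do under eq_bigr do rewrite ffunE.
rewrite -(bigA_distr_bigA (fun i (k : 'I_n) => (1 - b i) * (b i * C) ^+ k)) /=.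
apply: ler_prod => i _; have /andP[b_gt0 b_lt1] := b_prob i.
have bC_ge0 : 0 <= b i * C := mulr_ge0 (ltW b_gt0) C_ge0.
rewrite -mulr_sumr; apply/andP; split.
  by rewrite mulr_ge0 ?subr_ge0 ?(ltW b_lt1) // sumr_ge0 // => k _; rewrite exprn_ge0.
by rewrite ler_wpM2l ?subr_ge0 ?(ltW b_lt1) // geometric_partial_sum_le // bC_ge0 bC_lt1.
Qed.

Lemma sum_tilted_walk_prob_le s :
  uniq s -> \sum_(x <- s) tilted_walk_prob C x <= walk_mgf C.
Proof.
move=> s_uniq; set n := (\max_(x <- s) \max_(i < N) x i).+1.
apply: le_trans (sum_box_tilted_walk_prob_le n).
rewrite -(big_map ffun_val xpredT (tilted_walk_prob C)).
apply: uniq_sub_ler_sum => //.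
- by rewrite map_inj_uniq ?index_enum_uniq //; apply: ffun_val_inj.
- move=> x xs; apply/mapP.
  have x_lt i : (x i < n)%N.
    rewrite ltnS (leq_trans (@leq_bigmax _ (fun i => x i) i)) //.
    exact: (@leq_bigmax_seq _ s xpredT (fun x => \max_(i < N) x i) x xs).
  exists [ffun i => Ordinal (x_lt i)]; first by rewrite mem_index_enum.
  by apply/ffunP => i; rewrite !ffunE.
- by move=> x _; apply: tilted_walk_prob_ge0.
Qed.

End WalkMgf.
Arguments walk_mgf {R N}.
Arguments tilted_walk_prob {R N}.

Lemma sum_walk_pairs_V_le (R : realType) (N : nat) (b : 'I_N -> R) (c1 c2 : R)
    (s : seq ({ffun 'I_N -> nat} * {ffun 'I_N -> nat})) :
  (0 < N)%N -> (forall i, 0 < b i < 1) -> 0 < c1 -> 0 < c2 ->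
  (forall i, b i * c1 < 1) -> (forall i, b i * c2 < 1) -> uniq s ->
  \sum_(z <- s) walk_prob b z.1 * walk_prob b z.2 * V c1 c2 z.1 z.2
    <= walk_mgf b (Num.max 1 c2) * walk_mgf b (Num.max 1 c1).
Proof.
move=> N_gt0 b_prob c1_gt0 c2_gt0 bc1_lt1 bc2_lt1 s_uniq.
have max1_ge0 (c : R) : 0 <= Num.max 1 c by rewrite le_max ler01.
have tilted_ge0 (c : R) x : 0 <= tilted_walk_prob b (Num.max 1 c) x.
  exact: tilted_walk_prob_ge0.
have mgf_bound (c : R) t : (forall i, b i * c < 1) -> uniq t ->
    \sum_(x <- t) tilted_walk_prob b (Num.max 1 c) x <= walk_mgf b (Num.max 1 c).
  move=> bc_lt1 t_uniq; apply: sum_tilted_walk_prob_le => // i.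
  by have /andP[_ b_lt1] := b_prob i; rewrite mul_max1_lt1.
apply: (@le_trans _ _ (\sum_(z <- s)
    tilted_walk_prob b (Num.max 1 c2) z.1 * tilted_walk_prob b (Num.max 1 c1) z.2)).
  apply: ler_sum => z _; rewrite /tilted_walk_prob [leRHS]mulrACA.
  by rewrite ler_wpM2l ?mulr_ge0 ?walk_prob_ge0 // [leRHS]mulrC V_le.
apply: le_trans (sum_pairs_le_mul _ _ _ s_uniq (tilted_ge0 c2) (tilted_ge0 c1)) _.
apply: ler_pM; rewrite ?mgf_bound ?undup_uniq //.
all: by apply: sumr_ge0 => x _; apply: tilted_ge0.
Qed.

Theorem proposition2p18 (R : realType) (N : nat) (b : 'I_N -> R) (c1 c2 : R) :
  (0 < N)%N ->
  (forall i, 0 < b i < 1) ->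
  0 < c1 -> 0 < c2 ->
  (forall i j, b i * b j < 1) ->
  (forall i, b i * c1 < 1) ->
  (forall i, b i * c2 < 1) ->
  (E_GRW_V b c1 c2 < +oo)%E.
Proof.
move=> N_gt0 b_prob c1_gt0 c2_gt0 _ bc1_lt1 bc2_lt1.
apply: (le_lt_trans _ (ltry (walk_mgf b (Num.max 1 c2) * walk_mgf b (Num.max 1 c1)))).
apply: ge_ereal_sup => _ [A [A_fin _] <-].
rewrite fsbig_finite // sumEFin lee_fin.
exact: sum_walk_pairs_V_le (finmap.fset_uniq _).
Qed.
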